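(* Let $U\in\Omega$, $\alpha>0$, and suppose $\langle\nabla f(U),U\rangle<0$. Then $$\Pi_\Omega(U-\alpha\nabla f(U))=\Pi_{\mathcal C(\Omega)}(U-\alpha\nabla f(U)),$$ where $\mathcal C(\Omega)$ is the convex hull of $\Omega$.
   Context: $A\in\mathbb R^{n\times n}$ symmetric, $y\in\mathbb R^n$, $L\in\mathbb R$, $\beta>0$, integers $r,K\ge1$. $f(U)=\langle L I_n+A,UU^T\rangle+\langle y,UU^T\mathbf 1_n-\mathbf 1_n\rangle+\frac\beta2\|UU^T\mathbf 1_n-\mathbf 1_n\|_2^2$ for $U\in\mathbb R^{n\times r}$. $\Omega=\{U\in\mathbb R^{n\times r}:\|U\|_F^2=K,\ U\ge0\text{ entrywise}\}$. $\Pi_S$ denotes Euclidean (Frobenius) projection onto a set $S$; in particular $\Pi_\Omega(V)=\sqrt K(V)_+/\|(V)_+\|_F$ with $(V)_+=\max\{V,0\}$ entrywise. *)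

From HB Require Import structures.
From mathcomp Require Import all_boot all_order all_algebra.
From mathcomp Require Import all_classical all_reals all_analysis.
Set Implicit Arguments. Unset Strict Implicit. Unset Printing Implicit Defensive.
Import Order.TTheory GRing.Theory Num.Theory.
Import numFieldNormedType.Exports.
Local Open Scope classical_set_scope.
Local Open Scope ring_scope.

Definition frob (R : realType) (m k : nat) (X Y : 'M[R]_(m, k)) : R :=
  \sum_(i < m) \sum_(j < k) X i j * Y i j.

Definition ones (R : realType) (n : nat) : 'cV[R]_n := const_mx 1.

Definition fobj (R : realType) (n r : nat) (A : 'M[R]_n) (y : 'cV[R]_n)
    (L beta : R) (U : 'M[R]_(n, r)) : R :=
  let w := U *m U^T *m ones R n - ones R n in
  frob (L%:M + A) (U *m U^T) + frob y w + beta / 2 * frob w w.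

(* G is the (Euclidean/Frobenius) gradient of g at U:
   for every direction D, t |-> g(U + t D) has derivative <G, D> at t = 0. *)
Definition is_gradient (R : realType) (n r : nat) (g : 'M[R]_(n, r) -> R)
    (U G : 'M[R]_(n, r)) : Prop :=
  forall D : 'M[R]_(n, r),
    is_derive (0 : R) (1 : R) (fun t : R => g (U + t *: D)) (frob G D).

Definition Omega (R : realType) (n r K : nat) : set 'M[R]_(n, r) :=
  [set U | frob U U = K%:R /\ forall i j, 0 <= U i j].

Definition convhull (R : realType) (n r : nat) (S : set 'M[R]_(n, r))
    : set 'M[R]_(n, r) :=
  [set X | exists (k : nat) (w : 'I_k -> R) (P : 'I_k -> 'M[R]_(n, r)),
     (forall i, S (P i)) /\ (forall i, 0 <= w i) /\ \sum_(i < k) w i = 1 /\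
     X = \sum_(i < k) w i *: P i].

Definition is_proj (R : realType) (n r : nat) (S : set 'M[R]_(n, r))
    (V P : 'M[R]_(n, r)) : Prop :=
  S P /\ forall W, S W -> frob (V - P) (V - P) <= frob (V - W) (V - W).

Definition pospart (R : realType) (n r : nat) (V : 'M[R]_(n, r)) : 'M[R]_(n, r) :=
  map_mx (fun x => Num.max x 0) V.

(* closed form Pi_Omega(V) = sqrt K (V)_+ / ||(V)_+||_F *)
Definition PiOmega (R : realType) (n r K : nat) (V : 'M[R]_(n, r)) : 'M[R]_(n, r) :=
  (Num.sqrt (K%:R : R) / Num.sqrt (frob (pospart V) (pospart V))) *: pospart V.

From HB Require Import structures.
From mathcomp Require Import all_boot all_order all_algebra.
From mathcomp Require Import all_classical all_reals all_analysis.
From mathcomp Require Import ring lra.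
Set Implicit Arguments. Unset Strict Implicit. Unset Printing Implicit Defensive.
Import Order.TTheory GRing.Theory Num.Theory.
Local Open Scope classical_set_scope.
Local Open Scope ring_scope.

(** Both Omega and its convex hull lie in the nonnegative ball B of radius
  sqrt K.  Write V = U - alpha G.  For W in B, <V, W> <= <V_+, W> <= |V_+| |W|,
  and minimising |V|^2 - 2 |V_+| t + t^2 over 0 <= t <= sqrt K shows that the
  projection of V onto B is sqrt K V_+ / |V_+| as soon as |V_+| >= sqrt K.
  The latter follows from <G, U> < 0: K < <V, U> <= |V_+| sqrt K.  That point
  lies on the sphere, hence in Omega, so it is also the projection onto Omega
  and onto its convex hull. *)

Section Frobenius.
Variables (R : realType) (m k : nat).
Implicit Types (X Y Z V W : 'M[R]_(m, k)) (a : R).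

Definition fnorm X : R := Num.sqrt (frob X X).

Lemma frobC X Y : frob X Y = frob Y X.
Proof. by apply: eq_bigr => i _; apply: eq_bigr => j _; rewrite mulrC. Qed.

Lemma frobDl X Y Z : frob (X + Y) Z = frob X Z + frob Y Z.
Proof.
rewrite /frob -big_split; apply: eq_bigr => i _; rewrite -big_split.
by apply: eq_bigr => j _; rewrite mxE mulrDl.
Qed.

Lemma frobZl a X Y : frob (a *: X) Y = a * frob X Y.
Proof.
rewrite /frob mulr_sumr; apply: eq_bigr => i _; rewrite mulr_sumr.
by apply: eq_bigr => j _; rewrite mxE mulrA.
Qed.

Lemma frobZr a X Y : frob X (a *: Y) = a * frob X Y.
Proof. by rewrite frobC frobZl frobC. Qed.

Lemma frobBl X Y Z : frob (X - Y) Z = frob X Z - frob Y Z.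
Proof. by rewrite frobDl -scaleN1r frobZl mulN1r. Qed.

Lemma frobBr X Y Z : frob X (Y - Z) = frob X Y - frob X Z.
Proof. by rewrite frobC frobBl !(frobC X). Qed.

Lemma frobBB X Y : frob (X - Y) (X - Y) = frob X X - 2 * frob X Y + frob Y Y.
Proof. by rewrite frobBl !frobBr (frobC Y X); ring. Qed.

Lemma frob0l Y : frob 0 Y = 0.
Proof. by rewrite -(scale0r 0) frobZl mul0r. Qed.

Lemma frob_ge0 X : 0 <= frob X X.
Proof. by apply: sumr_ge0 => i _; apply: sumr_ge0 => j _; apply: sqr_ge0. Qed.

Lemma frob_eq0 X : frob X X = 0 -> X = 0.
Proof.
move=> XX0; apply/matrixP => i j; rewrite mxE.
have sq_ge0 i' j' : 0 <= X i' j' * X i' j' by rewrite -expr2 sqr_ge0.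
have row0 : \sum_j' X i j' * X i j' = 0.
  exact: psumr_eq0P (fun i' _ => sumr_ge0 _ (fun j' _ => sq_ge0 i' j')) XX0 _ isT.
have /eqP : X i j * X i j = 0 by exact: psumr_eq0P (fun j' _ => sq_ge0 i j') row0 _ isT.
by rewrite mulf_eq0 orbb => /eqP.
Qed.

Lemma fnorm_ge0 X : 0 <= fnorm X.
Proof. exact: sqrtr_ge0. Qed.

Lemma fnorm_sqr X : fnorm X ^+ 2 = frob X X.
Proof. by rewrite sqr_sqrtr // frob_ge0. Qed.

Lemma fnorm_eq0 X : fnorm X = 0 -> X = 0.
Proof.
move=> /eqP; rewrite sqrtr_eq0 => XX.
by apply: frob_eq0; apply/le_anti; rewrite XX frob_ge0.
Qed.

Lemma frob_CauchySchwarz X Y : frob X Y <= fnorm X * fnorm Y.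
Proof.
have [/fnorm_eq0 ->|nX0] := eqVneq (fnorm X) 0.
  by rewrite frob0l mulr_ge0 ?fnorm_ge0.
have [/fnorm_eq0 ->|nY0] := eqVneq (fnorm Y) 0.
  by rewrite frobC frob0l mulr_ge0 ?fnorm_ge0.
have s0 : 0 < fnorm X * fnorm Y by rewrite mulr_gt0 // lt_def ?nX0 ?nY0 fnorm_ge0.
have := frob_ge0 (fnorm Y *: X - fnorm X *: Y).
rewrite frobBB !frobZl !frobZr -!fnorm_sqr.
nra.
Qed.

Lemma fnormZ a X : fnorm (a *: X) = `|a| * fnorm X.
Proof. by rewrite /fnorm frobZl frobZr mulrA -expr2 sqrtrM ?sqr_ge0 // sqrtr_sqr. Qed.

Lemma fnormD X Y : fnorm (X + Y) <= fnorm X + fnorm Y.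
Proof.
rewrite -[leRHS]ger0_norm ?addr_ge0 ?fnorm_ge0 // -sqrtr_sqr ler_sqrt ?sqr_ge0 //.
rewrite frobDl !(frobC _ (X + Y)) !frobDl (frobC Y X) sqrrD mulr2n !fnorm_sqr.
have := frob_CauchySchwarz X Y; lra.
Qed.

Lemma fnorm_sum (I : Type) (s : seq I) (P : pred I) (F : I -> 'M[R]_(m, k)) :
  fnorm (\sum_(i <- s | P i) F i) <= \sum_(i <- s | P i) fnorm (F i).
Proof.
apply: (big_ind2 (fun X x => fnorm X <= x)).
- by rewrite /fnorm frob0l sqrtr0.
- by move=> X x Y y nX nY; apply: le_trans (fnormD X Y) (lerD nX nY).
- by [].
Qed.

Lemma fnorm_normalize a X : 0 <= a -> 0 < fnorm X -> fnorm ((a / fnorm X) *: X) = a.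
Proof. by move=> a0 nX; rewrite fnormZ ger0_norm ?divr_ge0 ?fnorm_ge0 // divfK ?gt_eqF. Qed.

Lemma pospart_ge0 V i j : 0 <= pospart V i j.
Proof. by rewrite mxE le_max lexx orbT. Qed.

Lemma frob_pospart V : frob V (pospart V) = fnorm (pospart V) ^+ 2.
Proof.
rewrite fnorm_sqr; apply: eq_bigr => i _; apply: eq_bigr => j _.
by rewrite !mxE maxEle; case: ifP; rewrite ?mulr0.
Qed.

Lemma frob_le_fnorm_pospart V W : (forall i j, 0 <= W i j) ->
  frob V W <= fnorm (pospart V) * fnorm W.
Proof.
move=> W0; apply: le_trans (frob_CauchySchwarz _ _).
apply: ler_sum => i _; apply: ler_sum => j _.
by rewrite mxE ler_wpM2r // le_max lexx.
Qed.

Definition nonneg_ball (rho : R) : set 'M[R]_(m, k) :=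
  [set W : 'M[R]_(m, k) | (forall i j, 0 <= W i j) /\ fnorm W <= rho].

Lemma is_proj_nonneg_ball (rho : R) V : 0 < rho -> rho <= fnorm (pospart V) ->
  is_proj (nonneg_ball rho) V ((rho / fnorm (pospart V)) *: pospart V).
Proof.
move=> rho0 rho_le; set a := fnorm (pospart V) in rho_le *; set P := _ *: pospart V.
have a0 : 0 < a by apply: lt_le_trans rho_le.
have nP : fnorm P = rho by rewrite fnorm_normalize ?ltW.
have VP : frob V P = rho * a by rewrite frobZr frob_pospart expr2 mulrA divfK ?gt_eqF.
split.
  split=> [i j|]; last by rewrite nP.
  by rewrite mxE mulr_ge0 ?pospart_ge0 ?divr_ge0 ?fnorm_ge0 ?ltW.
move=> W [W0 nW]; have VW := frob_le_fnorm_pospart V W0; rewrite -/a in VW.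
have := fnorm_ge0 W; set t := fnorm W in nW VW * => t0.
have gap : 0 <= (rho - t) * (2 * a - rho - t) by apply: mulr_ge0; lra.
rewrite !frobBB -!fnorm_sqr nP VP -/t; nra.
Qed.

End Frobenius.

Arguments nonneg_ball {R m k}.

Lemma is_proj_subset (R : realType) (n r : nat) (S T : set 'M[R]_(n, r)) V P :
  S `<=` T -> S P -> is_proj T V P -> is_proj S V P.
Proof. by move=> ST SP [_ Pmin]; split=> // W /ST; apply: Pmin. Qed.

Lemma sub_convhull (R : realType) (n r : nat) (S : set 'M[R]_(n, r)) :
  S `<=` convhull S.
Proof.
move=> X SX; exists 1%N, (fun=> 1), (fun=> X).
by split=> //; split=> //; rewrite !big_ord1 scale1r.
Qed.

Lemma convhull_sub_nonneg_ball (R : realType) (n r : nat) (rho : R)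
    (S : set 'M[R]_(n, r)) :
  S `<=` nonneg_ball rho -> convhull S `<=` nonneg_ball rho.
Proof.
move=> SB _ [l [w [P [SP [w0 [w1 ->]]]]]]; split.
  move=> i j; rewrite summxE; apply: sumr_ge0 => p _.
  by rewrite mxE mulr_ge0 //; case: (SB _ (SP p)).
apply: le_trans (fnorm_sum _ _ _) _.
rewrite -[rho]mul1r -w1 mulr_suml; apply: ler_sum => p _.
by rewrite fnormZ ger0_norm // ler_wpM2l //; case: (SB _ (SP p)).
Qed.

Lemma Omega_sub_nonneg_ball (R : realType) (n r K : nat) :
  @Omega R n r K `<=` nonneg_ball (Num.sqrt K%:R).
Proof. by move=> U [UU U0]; split=> //; rewrite /fnorm UU. Qed.

Theorem lemma19 (R : realType) (n r K : nat) (A : 'M[R]_n) (y : 'cV[R]_n)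
    (L beta alpha : R) (U G : 'M[R]_(n, r)) :
  A^T = A -> 0 < beta -> (1 <= r)%N -> (1 <= K)%N ->
  @Omega R n r K U ->
  is_gradient (fobj A y L beta) U G ->
  0 < alpha ->
  frob G U < 0 ->
  is_proj (@Omega R n r K) (U - alpha *: G) (PiOmega K (U - alpha *: G)) /\
  is_proj (convhull (@Omega R n r K)) (U - alpha *: G) (PiOmega K (U - alpha *: G)).
Proof.
move=> _ _ _ K1 [UU U0] _ alpha0 GU.
set V := U - alpha *: G; set s := Num.sqrt (K%:R : R).
have s0 : 0 < s by rewrite sqrtr_gt0 ltr0n.
have VU : s ^+ 2 < frob V U.
  rewrite sqr_sqrtr ?ler0n // frobBl frobZl UU.
  have : 0 < alpha * - frob G U by rewrite mulr_gt0 // oppr_gt0.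
  lra.
have nU : fnorm U = s by rewrite /fnorm UU.
have s_le : s <= fnorm (pospart V).
  by have := frob_le_fnorm_pospart V U0; rewrite nU; nra.
have proj := is_proj_nonneg_ball s0 s_le.
have OmegaP : Omega K (PiOmega K V).
  split; last by case: proj => -[].
  by rewrite -fnorm_sqr fnorm_normalize ?ltW ?(lt_le_trans s0) // sqr_sqrtr ?ler0n.
have -> : PiOmega K V = (s / fnorm (pospart V)) *: pospart V by [].
have OmegaB := @Omega_sub_nonneg_ball R n r K.
split; apply: is_proj_subset proj.
- exact: OmegaB.
- exact: OmegaP.
- exact: convhull_sub_nonneg_ball.
- exact: sub_convhull.
Qed.
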